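(* Let $M^\alpha,M^\beta$ be manifolds equipped with flows $\phi^\alpha,\phi^\beta$, let $N^\alpha,N^\beta$ be isolating neighborhoods, and let $h^{\beta\alpha}:M^\alpha\to M^\beta$ be an isolated map. Then there exists an open neighborhood $A$ of $(\phi^\alpha,h^{\beta\alpha},\phi^\beta)$ in $\mathscr{C}=\{(\tilde\phi^\alpha,\tilde h^{\beta\alpha},\tilde\phi^\beta)\in C^\infty(\mathbb{R}\times M^\alpha,M^\alpha)\times C^\infty(M^\alpha,M^\beta)\times C^\infty(\mathbb{R}\times M^\beta,M^\beta):N^\alpha,N^\beta\text{ are isolating neighborhoods of the flows }\tilde\phi^\alpha,\tilde\phi^\beta\}$, equipped with the compact-open topology, such that for every $(\tilde\phi^\alpha,\tilde h^{\beta\alpha},\tilde\phi^\beta)\in A$ the map $\tilde h^{\beta\alpha}$ is isolated with respect to $N^\alpha,N^\beta$ and the flows $\tilde\phi^\alpha,\tilde\phi^\beta$.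
   Context: A compact neighborhood $N$ is an isolating neighborhood for a flow $\phi$ if $\operatorname{Inv}(N,\phi)=\{x\in N:\phi(t,x)\in N\ \forall t\in\mathbb{R}\}\subset\operatorname{Int}N$. For a point $p$, $\mathcal{O}_+(p)=\{\phi(t,p):t\ge0\}$ and $\mathcal{O}_-(p)=\{\phi(t,p):t\le0\}$. A map $h:M^\alpha\to M^\beta$ is isolated (with respect to $N^\alpha,N^\beta$ and flows $\phi^\alpha,\phi^\beta$) if every $p$ in $S_h=\{p\in N^\alpha:\mathcal{O}_-(p)\subset N^\alpha,\ \mathcal{O}_+(h(p))\subset N^\beta\}$ satisfies $\mathcal{O}_-(p)\subset\operatorname{Int}N^\alpha$ and $\mathcal{O}_+(h(p))\subset\operatorname{Int}N^\beta$ (orbits taken with respect to $\phi^\alpha$, resp. $\phi^\beta$). *)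

From HB Require Import structures.
From mathcomp Require Import all_boot all_order all_algebra.
From mathcomp Require Import all_classical all_reals all_analysis.
Set Implicit Arguments. Unset Strict Implicit. Unset Printing Implicit Defensive.
Import Order.TTheory GRing.Theory Num.Theory.
Import numFieldNormedType.Exports.
Local Open Scope classical_set_scope.
Local Open Scope ring_scope.

Section Flows.
Context {R : realType} {M : topologicalType}.

Definition is_flow (phi : R * M -> M) : Prop :=
  continuous phi /\ (forall x, phi (0, x) = x) /\
  (forall s t x, phi (s + t, x) = phi (s, phi (t, x))).

Definition Inv (N : set M) (phi : R * M -> M) : set M :=
  [set x | N x /\ forall t : R, N (phi (t, x))].

Definition isolating_nbhd (N : set M) (phi : R * M -> M) : Prop :=
  compact N /\ Inv N phi `<=` interior N.

Definition orbit_fwd (phi : R * M -> M) (p : M) : set M :=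
  [set phi (t, p) | t in [set t : R | 0 <= t]].
Definition orbit_bwd (phi : R * M -> M) (p : M) : set M :=
  [set phi (t, p) | t in [set t : R | t <= 0]].
End Flows.

Section Isolated.
Context {R : realType} {Ma Mb : topologicalType}.

Definition S_h (Na : set Ma) (Nb : set Mb) (phia : R * Ma -> Ma)
  (h : Ma -> Mb) (phib : R * Mb -> Mb) : set Ma :=
  [set p | Na p /\ orbit_bwd phia p `<=` Na /\ orbit_fwd phib (h p) `<=` Nb].

Definition isolated_map (Na : set Ma) (Nb : set Mb) (phia : R * Ma -> Ma)
  (h : Ma -> Mb) (phib : R * Mb -> Mb) : Prop :=
  forall p, S_h Na Nb phia h phib p ->
    orbit_bwd phia p `<=` interior Na /\ orbit_fwd phib (h p) `<=` interior Nb.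
End Isolated.

From HB Require Import structures.
From mathcomp Require Import all_boot all_order all_algebra.
From mathcomp Require Import all_classical all_reals all_analysis.
From mathcomp Require Import lra.
Import Order.TTheory GRing.Theory Num.Theory.
Import numFieldNormedType.Exports.
Local Open Scope classical_set_scope.
Local Open Scope ring_scope.

(* Since N \ Int N is compact and none of its points has its whole orbit in N, there
   is a time T within which every boundary point leaves N, and this persists for all
   flows close to phi in the compact-open topology.  If the backward orbit of a point p
   of S_h of a perturbed system met the boundary of N^alpha at a time t <= 0, it would
   leave N^alpha at some time in [t - T, t + T]; staying in N^alpha for negative times,
   it must do so at a positive time, hence t >= -T.  Symmetrically for forward orbits.
   So it suffices that, for all nearby systems, the orbit segments of points of S_h over
   [-T, 0] and [0, T] stay in the interiors.  For the unperturbed system this holds on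
   S_h because h is isolated, while points outside S_h stay outside for nearby systems;
   the tube lemma over compact time segments and the compactness of N^alpha make both
   facts uniform. *)

Definition compact_nbhs_basis {T : topologicalType} (x : T) :=
  forall U, nbhs x U -> exists2 K, compact K /\ nbhs x K & K `<=` U.

Lemma locally_compact_nbhs_basis {T : topologicalType} :
  hausdorff_space T -> locally_compact [set: T] -> forall x : T, compact_nbhs_basis x.
Proof.
move=> hT lcT x U Ux.
have [C] := lcT x I; rewrite withinET => Cx [cptC clC].
have [B Bx BU] := compact_regular hT cptC Cx Ux.
exists (C `&` closure B); last by move=> y [_ /BU].
split; first by apply: compact_closedI => //; exact: closed_closure.
by apply: filterI => //; apply: filterS Bx; exact: subset_closure.
Qed.

Lemma compact_nbhs_basis_pair {T U : topologicalType} {a : T} {b : U} :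
  compact_nbhs_basis a -> compact_nbhs_basis b -> compact_nbhs_basis (a, b).
Proof.
move=> ca cb S [[P Q] [Pa Qb] PQS].
have [K1 [cK1 aK1] K1P] := ca _ Pa; have [K2 [cK2 bK2] K2Q] := cb _ Qb.
exists (K1 `*` K2); first by split; [exact: compact_setX | exists (K1, K2)].
by move=> [y z] [/K1P ? /K2Q ?]; apply: PQS.
Qed.

Lemma compact_nbhs_basisR {R : realType} : forall t : R, compact_nbhs_basis t.
Proof. exact: locally_compact_nbhs_basis (@Rhausdorff R) (@locally_compactR R). Qed.

Lemma fst_continuous {A B : topologicalType} : continuous (@fst A B).
Proof. by case=> a b; exact: cvg_fst. Qed.

Lemma snd_continuous {A B : topologicalType} : continuous (@snd A B).
Proof. by case=> a b; exact: cvg_snd. Qed.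

Lemma near_pair {X Z : topologicalType} {x : X} {z : Z} {P : X -> Z -> Prop} :
  (\forall q \near (x, z), P q.1 q.2) -> \forall x' \near x & z' \near z, P x' z'.
Proof.
by case=> -[A B] [Ax Bz] AB; exists (A, B) => // -[a b] [/= Aa Bb]; exact: (AB (a, b)).
Qed.

Lemma near_open_nbhs {T : topologicalType} {x : T} {P : set T} :
  (\forall y \near x, P y) -> exists A, [/\ open A, A x & A `<=` P].
Proof.
by move=> xP; exists P°; split=> //; [exact: open_interior | exact: interior_subset].
Qed.

Lemma compact_tube {X Z Y : topologicalType} {K : set X} {G : X * Z -> Y}
    {z : Z} {O : set Y} :
  compact K -> open O -> (forall x, K x -> {for (x, z), continuous G}) ->
  (forall x, K x -> O (G (x, z))) ->
  \forall z' \near z, forall x, K x -> O (G (x, z')).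
Proof.
move=> cK oO cG KO; apply: (proj1 (compact_near_coveringP K) cK) => x Kx.
have [[P Q] [Px Qz] PQO] := cG x Kx O (open_nbhs_nbhs (conj oO (KO x Kx))).
by exists (P, Q) => // -[a b] [/= Pa Qb]; exact: (PQO (a, b)).
Qed.

(* The compact-open neighbourhood of maps sending a compact neighbourhood of [x]
   into [O] does the job. *)
Lemma compact_open_eval_cvg {X Y : topologicalType} {g : {compact-open, X -> Y}} {x : X} :
  compact_nbhs_basis x -> {for x, continuous (g : X -> Y)} ->
  {for (g, x), continuous (fun q : {compact-open, X -> Y} * X => (q.1 : X -> Y) q.2)}.
Proof.
move=> cx cg V; rewrite nbhsE; case=> O [oO Ogx] OV.
have [K [cK xK] KO] := cx _ (cg _ (open_nbhs_nbhs (conj oO Ogx))).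
exists ([set f : {compact-open, X -> Y} | (f : X -> Y) @` K `<=` O], K) => /=.
  split => //; apply: open_nbhs_nbhs; split; first exact: compact_open_open.
  by move=> _ [y Ky <-]; exact: KO.
by move=> [f y] /= [fKO Ky]; apply: OV; apply: fKO; exists y.
Qed.

Lemma compact_open_eval_comp {Z X Y : topologicalType}
    {F : Z -> {compact-open, X -> Y}} {u : Z -> X} {z : Z} :
  {for z, continuous F} -> {for z, continuous u} ->
  compact_nbhs_basis (u z) -> {for u z, continuous (F z : X -> Y)} ->
  {for z, continuous (fun z => (F z : X -> Y) (u z))}.
Proof.
move=> cF cu cb cFz.
apply: (@continuous_comp _ _ _ (fun z => (F z, u z))
  (fun q : {compact-open, X -> Y} * X => (q.1 : X -> Y) q.2)).
  exact: (cvg_pair cF cu).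
exact: compact_open_eval_cvg.
Qed.

Section Flows.
Context {R : realType}.

Definition exits_within {M : topologicalType} (T : R) (N : set M) (f : R * M -> M) :=
  forall x, (N `\` N°) x -> exists2 s, `|s| <= T & ~ N (f (s, x)).

Lemma uniform_exit_time {M : topologicalType} {N : set M} {phi : R * M -> M} :
  (forall x : M, compact_nbhs_basis x) -> closed N -> continuous phi ->
  isolating_nbhd N phi ->
  exists T : R, \forall f \near (phi : {compact-open, (R * M)%type -> M}),
    exits_within T N (f : R * M -> M).
Proof.
move=> cbM clN cphi [cN iN].
have cK : compact (N `\` N°).
  by apply: compact_closedI => //; apply: open_closedC; exact: open_interior.
pose F := filter_prod (nbhs (phi : {compact-open, (R * M)%type -> M})) (pinfty_nbhs R).
pose P (fT : {compact-open, (R * M)%type -> M} * R) x :=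
  exists2 s, `|s| <= fT.2 & ~ N ((fT.1 : R * M -> M) (s, x)).
(* Compactness of [N `\` N°] along the product of the filters [f --> phi], [T --> +oo]. *)
have : \near F, (N `\` N°) `<=` P F.
  apply: (proj1 (compact_near_coveringP _) cK) => x [Nx Nx'].
  have [t Nt] : exists t, ~ N (phi (t, x)).
    apply: contrapT => Nphi; apply/Nx'/iN; split=> // t.
    by apply: contrapT => Nt; apply: Nphi; exists t.
  have cbtx := compact_nbhs_basis_pair (compact_nbhs_basisR t) (cbM x).
  have [[W B] [Wphi [[B1 B2] [B1t B2x] B12]] WB] := compact_open_eval_cvg cbtx
    (cphi (t, x)) _ (open_nbhs_nbhs (conj (closed_openC clN) Nt)).
  exists (B2, W `*` [set T | `|t| <= T]).
    by split=> //; exists (W, [set T | `|t| <= T]) => //; split=> //; exact: nbhs_pinfty_ge.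
  move=> [x' [f T]] [/= B2x' [Wf tT]]; exists t => //.
  apply: (WB (f, (t, x'))); split=> //.
  by apply: (B12 (t, x')); split=> //; exact: nbhs_singleton.
case=> -[W Ts] [Wphi [T0 [_ T0Ts]]] WTs; exists (T0 + 1).
apply: filterS Wphi => f Wf x Kx.
by apply: (WTs (f, T0 + 1)) => //; split=> //; apply: T0Ts; rewrite ltrDl.
Qed.

Lemma orbit_bwd_interior {M : topologicalType} {f : R * M -> M} {N : set M} {T : R} {p : M} :
  (forall s t x, f (s + t, x) = f (s, f (t, x))) -> exits_within T N f ->
  orbit_bwd f p `<=` N -> (fun t => f (t, p)) @` `[- T, 0]%classic `<=` N° ->
  orbit_bwd f p `<=` N°.
Proof.
move=> fD exitN bwN segN _ [t /= t0 <-]; apply: contrapT => Nt.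
have [s sT] := exitN _ (conj (bwN _ (ex_intro2 _ _ t t0 erefl)) Nt).
rewrite -fD => Nst; have st : 0 < s + t.
  by rewrite ltNge; apply/negP => st0; apply/Nst/bwN; exists (s + t).
apply/Nt/segN; exists t => //=; rewrite in_itv /= t0 andbT.
by move: sT; rewrite ler_norml => /andP[_ sT]; lra.
Qed.

Lemma orbit_fwd_interior {M : topologicalType} {f : R * M -> M} {N : set M} {T : R} {p : M} :
  (forall s t x, f (s + t, x) = f (s, f (t, x))) -> exits_within T N f ->
  orbit_fwd f p `<=` N -> (fun t => f (t, p)) @` `[0, T]%classic `<=` N° ->
  orbit_fwd f p `<=` N°.
Proof.
move=> fD exitN fwN segN _ [t /= t0 <-]; apply: contrapT => Nt.
have [s sT] := exitN _ (conj (fwN _ (ex_intro2 _ _ t t0 erefl)) Nt).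
rewrite -fD => Nst; have st : s + t < 0.
  by rewrite ltNge; apply/negP => st0; apply/Nst/fwN; exists (s + t).
apply/Nt/segN; exists t => //=; rewrite in_itv /= t0 /=.
by move: sT; rewrite ler_norml => /andP[sT _]; lra.
Qed.

End Flows.

Section Perturbation.
Context {R : realType} {Ma Mb : topologicalType}.
Local Notation CA := {compact-open, (R * Ma)%type -> Ma}.
Local Notation CH := {compact-open, Ma -> Mb}.
Local Notation CB := {compact-open, (R * Mb)%type -> Mb}.
Local Notation TimedPoint := (R * (Ma * (CA * CH * CB)))%type.
Hypotheses (cbA : forall x : Ma, compact_nbhs_basis x)
  (cbB : forall y : Mb, compact_nbhs_basis y).
Context {phia : R * Ma -> Ma} {h : Ma -> Mb} {phib : R * Mb -> Mb}.
Hypotheses (cphia : continuous phia) (ch : continuous h) (cphib : continuous phib).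
Context {Na : set Ma} {Nb : set Mb}.
Hypotheses (clNa : closed Na) (clNb : closed Nb).

Let Q0 : CA * CH * CB := (phia, h, phib).

Let eval_bwd (q : TimedPoint) : Ma :=
  (q.2.2.1.1 : R * Ma -> Ma) (q.1, q.2.1).
Let eval_fwd (q : TimedPoint) : Mb :=
  (q.2.2.2 : R * Mb -> Mb) (q.1, (q.2.2.1.2 : Ma -> Mb) q.2.1).

Let eval_bwd_continuous t x : {for (t, (x, Q0)), continuous eval_bwd}.
Proof.
apply: (@compact_open_eval_comp _ _ _ (fun q : TimedPoint => q.2.2.1.1)
  (fun q : TimedPoint => (q.1, q.2.1))).
- exact: (continuous_comp (snd_continuous _) (continuous_comp (snd_continuous _)
    (continuous_comp (fst_continuous _) (fst_continuous _)))).
- exact: (cvg_pair (fst_continuous _) (continuous_comp (snd_continuous _) (fst_continuous _))).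
- exact: compact_nbhs_basis_pair (compact_nbhs_basisR t) (cbA x).
- exact: cphia.
Qed.

Let eval_fwd_continuous t x : {for (t, (x, Q0)), continuous eval_fwd}.
Proof.
have ch_eval :
    {for (t, (x, Q0)), continuous (fun q : TimedPoint => (q.2.2.1.2 : Ma -> Mb) q.2.1)}.
  apply: (@compact_open_eval_comp _ _ _ (fun q : TimedPoint => q.2.2.1.2)
    (fun q : TimedPoint => q.2.1)) => //.
  - exact: (continuous_comp (snd_continuous _) (continuous_comp (snd_continuous _)
      (continuous_comp (fst_continuous _) (snd_continuous _)))).
  - exact: (continuous_comp (snd_continuous _) (fst_continuous _)).
  - exact: ch.
apply: (@compact_open_eval_comp _ _ _ (fun q : TimedPoint => q.2.2.2)
  (fun q : TimedPoint => (q.1, (q.2.2.1.2 : Ma -> Mb) q.2.1))).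
- exact: (continuous_comp (snd_continuous _) (continuous_comp (snd_continuous _)
    (snd_continuous _))).
- exact: (cvg_pair (fst_continuous _) ch_eval).
- exact: compact_nbhs_basis_pair (compact_nbhs_basisR t) (cbB (h x)).
- exact: cphib.
Qed.

Lemma near_orbits_interior (T : R) (x : Ma) :
  orbit_bwd phia x `<=` Na° -> orbit_fwd phib (h x) `<=` Nb° ->
  \forall q \near (x, Q0),
    (fun t => eval_bwd (t, q)) @` `[- T, 0]%classic `<=` Na° /\
    (fun u => eval_fwd (u, q)) @` `[0, T]%classic `<=` Nb°.
Proof.
move=> ibw ifw.
have bw : \forall q \near (x, Q0), forall t, `[- T, 0]%classic t -> Na° (eval_bwd (t, q)).
  apply: compact_tube => [||t _|t]; [exact: segment_compact|exact: open_interior| |].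
  - exact: eval_bwd_continuous.
  - by rewrite /= in_itv /= => /andP[_ t0]; apply: ibw; exists t.
have fw : \forall q \near (x, Q0), forall u, `[0, T]%classic u -> Nb° (eval_fwd (u, q)).
  apply: compact_tube => [||u _|u]; [exact: segment_compact|exact: open_interior| |].
  - exact: eval_fwd_continuous.
  - by rewrite /= in_itv /= => /andP[u0 _]; apply: ifw; exists u.
apply: filterS2 bw fw => q bwq fwq.
by split=> _ [t tT <-]; [exact: bwq | exact: fwq].
Qed.

Lemma near_not_S_h (x : Ma) :
  ~ (orbit_bwd phia x `<=` Na /\ orbit_fwd phib (h x) `<=` Nb) ->
  \forall q \near (x, Q0), ~ S_h Na Nb q.2.1.1 q.2.1.2 q.2.2 q.1.
Proof.
case/not_andP => /existsNP[_ /not_implyP[[t t0 <-] Nt]].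
- have : \forall q \near (x, Q0), forall s, [set t] s -> (~` Na) (eval_bwd (s, q)).
    apply: compact_tube => [||s _|s ->] //; first exact: compact_set1.
    + exact: closed_openC.
    + exact: eval_bwd_continuous.
  by apply: filterS => q Nq [_ [bwq _]]; apply: (Nq t) => //; apply: bwq; exists t.
- have : \forall q \near (x, Q0), forall s, [set t] s -> (~` Nb) (eval_fwd (s, q)).
    apply: compact_tube => [||s _|s ->] //; first exact: compact_set1.
    + exact: closed_openC.
    + exact: eval_fwd_continuous.
  by apply: filterS => q Nq [_ [_ fwq]]; apply: (Nq t) => //; apply: fwq; exists t.
Qed.

Lemma near_S_h_segments_interior (T : R) :
  compact Na -> isolated_map Na Nb phia h phib ->
  \forall Q \near Q0, forall p, S_h Na Nb Q.1.1 Q.1.2 Q.2 p ->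
    (fun t => (Q.1.1 : R * Ma -> Ma) (t, p)) @` `[- T, 0]%classic `<=` Na° /\
    (fun u => (Q.2 : R * Mb -> Mb) (u, (Q.1.2 : Ma -> Mb) p)) @` `[0, T]%classic `<=` Nb°.
Proof.
move=> cNa iso.
pose P (Q : CA * CH * CB) p :=
  (fun t => (Q.1.1 : R * Ma -> Ma) (t, p)) @` `[- T, 0]%classic `<=` Na° /\
  (fun u => (Q.2 : R * Mb -> Mb) (u, (Q.1.2 : Ma -> Mb) p)) @` `[0, T]%classic `<=` Nb°.
suff : \forall Q \near Q0, Na `<=` fun p => S_h Na Nb Q.1.1 Q.1.2 Q.2 p -> P Q p.
  by apply: filterS => Q SQ p Sp; apply: SQ => //; case: Sp.
apply: (proj1 (compact_near_coveringP Na) cNa _ (nbhs Q0)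
  (fun Q p => S_h Na Nb Q.1.1 Q.1.2 Q.2 p -> P Q p)) => x Nx.
apply: near_pair.
have [[bw fw]|nS] := pselect (orbit_bwd phia x `<=` Na /\ orbit_fwd phib (h x) `<=` Nb).
  have [ibw ifw] := iso x (conj Nx (conj bw fw)).
  by move: (near_orbits_interior T x ibw ifw); apply: filterS => q + _.
by move: (near_not_S_h x nS); apply: filterS => q nSq /nSq.
Qed.

Lemma near_isolated_map :
  isolating_nbhd Na phia -> isolating_nbhd Nb phib -> isolated_map Na Nb phia h phib ->
  \forall Q \near Q0, is_flow (Q.1.1 : R * Ma -> Ma) -> is_flow (Q.2 : R * Mb -> Mb) ->
    isolated_map Na Nb Q.1.1 Q.1.2 Q.2.
Proof.
move=> isoNa isoNb iso.
have [Ta exitA] := uniform_exit_time cbA clNa cphia isoNa.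
have [Tb exitB] := uniform_exit_time cbB clNb cphib isoNb.
have exitQa : \forall Q \near Q0, exits_within Ta Na (Q.1.1 : R * Ma -> Ma).
  by move: exitA; apply: (continuous_comp (fst_continuous Q0) (fst_continuous _)).
have exitQb : \forall Q \near Q0, exits_within Tb Nb (Q.2 : R * Mb -> Mb).
  exact: (snd_continuous Q0 _ exitB).
have segA := near_S_h_segments_interior Ta isoNa.1 iso.
have segB := near_S_h_segments_interior Tb isoNa.1 iso.
apply: (filterS _ (filterI (filterI exitQa exitQb) (filterI segA segB))).
move=> Q [[exQa exQb] [sA sB]] [_ [_ QaD]] [_ [_ QbD]] p Sp; split.
- exact: orbit_bwd_interior QaD exQa Sp.2.1 (sA p Sp).1.
- exact: orbit_fwd_interior QbD exQb Sp.2.2 (sB p Sp).2.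
Qed.

End Perturbation.

Theorem proposition5p2 (R : realType) (Ma Mb : topologicalType)
  (hsMa : hausdorff_space Ma) (lcMa : locally_compact [set: Ma])
  (hsMb : hausdorff_space Mb) (lcMb : locally_compact [set: Mb])
  (Na : set Ma) (Nb : set Mb)
  (phia : R * Ma -> Ma) (h : Ma -> Mb) (phib : R * Mb -> Mb) :
  is_flow phia -> is_flow phib -> continuous h ->
  isolating_nbhd Na phia -> isolating_nbhd Nb phib ->
  isolated_map Na Nb phia h phib ->
  exists A : set ({compact-open, (R * Ma)%type -> Ma} * {compact-open, Ma -> Mb}
                  * {compact-open, (R * Mb)%type -> Mb}),
    open A /\ A (phia, h, phib) /\
    forall (phia' : R * Ma -> Ma) (h' : Ma -> Mb) (phib' : R * Mb -> Mb),
      A (phia', h', phib') ->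
      is_flow phia' -> continuous h' -> is_flow phib' ->
      isolating_nbhd Na phia' -> isolating_nbhd Nb phib' ->
      isolated_map Na Nb phia' h' phib'.
Proof.
move=> [cphia _] [cphib _] ch isoNa isoNb iso.
have cbA := locally_compact_nbhs_basis hsMa lcMa.
have cbB := locally_compact_nbhs_basis hsMb lcMb.
have clNa := compact_closed hsMa isoNa.1; have clNb := compact_closed hsMb isoNb.1.
have [A [oA A0 AG]] :=
  near_open_nbhs (near_isolated_map cbA cbB cphia ch cphib clNa clNb isoNa isoNb iso).
exists A; split=> //; split=> //.
by move=> phia' h' phib' /AG + fa' _ fb' _ _; exact.
Qed.
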